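(* Let $d>0$, let $I\subseteq\mathbb{R}$ be a nonempty, non-singleton interval with $\ell(I)\geq d$, and let $f: I\to\mathbb{R}$ be $d$-periodically increasing. Then there exists an increasing function $\widehat{f}: I\to\mathbb{R}$ such that $\sup_{x\in I}|f(x)-\widehat{f}(x)|\leq\frac{\mathscr{H}_d(f)}{2}$.
   Context: $\ell(I)$ denotes the length of $I$. A function $f: I\to\mathbb{R}$ is $d$-periodically increasing if $f(x)\leq f(y)$ for all $x,y\in I$ with $y-x\geq d$. For $x\in I$ let $\mathscr{H}_{x_d}(f)=\sup_{u,v\in[x,x+d]\cap I}|f(u)-f(v)|$, and $\mathscr{H}_d(f)=\sup_{x\in I}\mathscr{H}_{x_d}(f)$. *)

From HB Require Import structures.
From mathcomp Require Import all_boot all_order all_algebra.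
From mathcomp Require Import all_classical all_reals all_analysis.
Set Implicit Arguments. Unset Strict Implicit. Unset Printing Implicit Defensive.
Import Order.TTheory GRing.Theory Num.Theory.
Local Open Scope classical_set_scope.
Local Open Scope ring_scope.

Definition ell (R : realType) (I : set R) : \bar R :=
  (ereal_sup (EFin @` I) - ereal_inf (EFin @` I))%E.

Definition periodically_increasing (R : realType) (d : R) (I : set R)
  (f : R -> R) : Prop :=
  forall x y, I x -> I y -> d <= y - x -> f x <= f y.

Definition increasing_on (R : realType) (I : set R) (f : R -> R) : Prop :=
  forall x y, I x -> I y -> x <= y -> f x <= f y.

Definition Hxd (R : realType) (d : R) (I : set R) (f : R -> R) (x : R) : \bar R :=
  ereal_sup [set (`|f u - f v|)%:E | u in `[x, x + d] `&` I & v in `[x, x + d] `&` I].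

Definition Hd (R : realType) (d : R) (I : set R) (f : R -> R) : \bar R :=
  ereal_sup [set Hxd d I f x | x in I].

(* Let H = H_d(f) and g(x) = sup {f t | t in I, t <= x}, the running maximum of f.
   For t <= x in I, either x - t >= d and f t <= f x by periodic monotonicity, or
   t and x lie in the window [t, t + d] and f t <= f x + H; hence f <= g <= f + H.
   The increasing function g - H/2 is therefore within H/2 of f. *)
From HB Require Import structures.
From mathcomp Require Import all_boot all_order all_algebra.
From mathcomp Require Import all_classical all_reals all_analysis.
Import Order.TTheory GRing.Theory Num.Theory.
From mathcomp Require Import lra.
Local Open Scope classical_set_scope.
Local Open Scope ring_scope.

Lemma Hd_ge_oscillation {R : realType} {d : R} {I : set R} (f : R -> R) {t x : R} :
  I t -> I x -> t <= x -> x <= t + d -> ((`|f t - f x|)%:E <= Hd d I f)%E.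
Proof.
move=> It Ix tx xtd; apply: (@le_trans _ _ (Hxd d I f t)).
  have tI : (`[t, t + d] `&` I) t by split; rewrite //= in_itv /= lexx (le_trans tx).
  by apply: ereal_sup_ubound; exists t => //; exists x; rewrite //= in_itv /= tx.
by apply: ereal_sup_ubound; exists t.
Qed.

Lemma Hd_ge0 {R : realType} {d : R} {I : set R} (f : R -> R) {a : R} :
  0 <= d -> I a -> (0 <= Hd d I f)%E.
Proof.
move=> d_ge0 Ia; have := Hd_ge_oscillation f Ia Ia (lexx a).
by rewrite subrr normr0; apply; rewrite lerDl.
Qed.

Definition running_sup {R : realType} (I : set R) (f : R -> R) (x : R) : R :=
  sup [set f t | t in [set t | I t /\ t <= x]].

Section RunningSup.
Variables (R : realType) (d H : R) (I : set R) (f : R -> R).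
Hypothesis f_pinc : periodically_increasing d I f.
Hypothesis H_ge0 : 0 <= H.
Hypothesis f_osc : forall t x, I t -> I x -> t <= x -> x <= t + d -> `|f t - f x| <= H.

Lemma le_past_values t x : I t -> I x -> t <= x -> f t <= f x + H.
Proof.
move=> It Ix tx; case: (lerP d (x - t)) => [d_le | lt_d].
  by rewrite (le_trans (f_pinc _ _ It Ix d_le)) // lerDl.
have := f_osc _ _ It Ix tx; rewrite -lerBlDl => /(_ (ltW lt_d)).
by rewrite ler_norml => /andP[_]; lra.
Qed.

Let past_values_ubound x : I x -> ubound [set f t | t in [set t | I t /\ t <= x]] (f x + H).
Proof. by move=> Ix _ [t [It tx] <-]; exact: le_past_values. Qed.

Lemma le_running_sup x : I x -> f x <= running_sup I f x.
Proof.
by move=> Ix; apply: ub_le_sup; [exists (f x + H); exact: past_values_ubound | exists x].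
Qed.

Lemma running_sup_le x : I x -> running_sup I f x <= f x + H.
Proof. by move=> Ix; apply: ge_sup; [exists (f x), x | exact: past_values_ubound]. Qed.

Lemma running_sup_increasing : increasing_on I (running_sup I f).
Proof.
move=> x y Ix Iy xy; apply: sup_le.
- move=> _ [t [It tx] <-]; exists (f t); split => //.
  by exists t => //; split => //; exact: le_trans xy.
- by exists (f x), x.
- by split; [exists (f y), y | exists (f y + H); exact: past_values_ubound].
Qed.

Lemma increasing_approximation :
  exists fh : R -> R, increasing_on I fh /\ forall x, I x -> `|f x - fh x| <= H / 2.
Proof.
exists (fun x => running_sup I f x - H / 2); split.
  by move=> x y Ix Iy xy; rewrite lerD2r; exact: running_sup_increasing.
move=> x Ix; have := le_running_sup _ Ix; have := running_sup_le _ Ix.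
by rewrite ler_norml; lra.
Qed.

End RunningSup.

Arguments increasing_approximation {R d H I f}.

Theorem theorem3p3 (R : realType) (d : R) (I : set R) (f : R -> R) :
  0 < d ->
  is_interval I ->
  (exists a b, I a /\ I b /\ a < b) ->
  (d%:E <= ell I)%E ->
  periodically_increasing d I f ->
  exists fh : R -> R, increasing_on I fh /\
    (ereal_sup [set (`|f x - fh x|)%:E | x in I] <= Hd d I f / 2%:E)%E.
Proof.
move=> /ltW d_ge0 _ [a [_ [Ia _]]] _ f_pinc.
have := Hd_ge0 f d_ge0 Ia; have := @Hd_ge_oscillation _ d I f.
case: (Hd d I f) => [H | | ] f_osc H_ge0; last by rewrite leeNy_eq in H_ge0.
  rewrite lee_fin in H_ge0.
  have [|fh [fh_incr fh_near]] := increasing_approximation f_pinc H_ge0.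
    by move=> t x It Ix tx xtd; rewrite -lee_fin (f_osc _ _ It Ix tx xtd).
  exists fh; split; first exact: fh_incr.
  apply: ge_ereal_sup => _ [x Ix <-].
  by rewrite inver pnatr_eq0 -EFinM lee_fin fh_near.
exists (fun=> 0); split=> [x y _ _ _ // | ].
by rewrite gt0_mulye ?leey // inver pnatr_eq0 lte_fin invr_gt0.
Qed.
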